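(* For every integer $n\ge1$, $$\int_2^\infty F_n(w)\,dw\le n.$$
   Context: For $w>0$ and integer $n\ge1$ let $a_n(w)=\sum_{j=0}^n w^j$, $b_n(w)=\sum_{j=1}^n jw^j$, $c_n(w)=\sum_{j=0}^n j^2w^j$, and $$F_n(w)=\frac{1}{2\sqrt{w}}\sqrt{\frac{c_n(w)}{a_n(w)}}\sqrt{\frac{a_n(w)c_n(w)-b_n(w)^2}{w\,a_n(w)^2}}.$$ *)

From mathcomp Require Import all_boot all_order all_algebra.
From mathcomp Require Import all_classical all_reals all_analysis.
Set Implicit Arguments. Unset Strict Implicit. Unset Printing Implicit Defensive.
Import Order.TTheory GRing.Theory Num.Theory.
Local Open Scope ring_scope.

Section Defs.
Variable R : realType.

Definition aF (n : nat) (w : R) : R := \sum_(0 <= j < n.+1) w ^+ j.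
Definition bF (n : nat) (w : R) : R := \sum_(1 <= j < n.+1) j%:R * w ^+ j.
Definition cF (n : nat) (w : R) : R := \sum_(0 <= j < n.+1) (j%:R) ^+ 2 * w ^+ j.

Definition FF (n : nat) (w : R) : R :=
  (2 * Num.sqrt w)^-1 * Num.sqrt (cF n w / aF n w) *
  Num.sqrt ((aF n w * cF n w - bF n w ^+ 2) / (w * aF n w ^+ 2)).
End Defs.

From mathcomp Require Import all_boot all_order all_algebra.
From mathcomp Require Import all_classical all_reals all_analysis.
From mathcomp Require Import ring lra measurable_realfun ftc.
Import Order.TTheory GRing.Theory Num.Theory numFieldNormedType.Exports.
Local Open Scope classical_set_scope.
Local Open Scope ring_scope.

(* Write a, b, c for a_n(w), b_n(w), c_n(w).  Since c <= n^2 a, the factor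
   sqrt(c/a) is at most n.  The numerator a c - b^2 equals a d - (n a - b)^2
   with d = n^2 a - 2 n b + c = \sum_j (n - j)^2 w^j, and the closed form
   (w - 1)^3 d = w^(n+1) (w + 1) - ((n + 1) w - n)^2 - w yields
   (a c - b^2) (w - 1)^3 <= w^2 a^2 for w > 1.  Hence
   F_n(w) <= n / (2 (w - 1)^(3/2)), whose integral over [2, +oo[ is exactly n,
   with antiderivative - n / sqrt(w - 1). *)

Section Moments.
Set Implicit Arguments.
Unset Strict Implicit.
Context {R : realType}.
Implicit Types (n : nat) (w x : R).

Lemma aF_recr n w : aF n.+1 w = aF n w + w ^+ n.+1.
Proof. by rewrite /aF big_nat_recr. Qed.

Lemma bF_recr n w : bF n.+1 w = bF n w + n.+1%:R * w ^+ n.+1.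
Proof. by rewrite /bF big_nat_recr. Qed.

Lemma cF_recr n w : cF n.+1 w = cF n w + n.+1%:R ^+ 2 * w ^+ n.+1.
Proof. by rewrite /cF big_nat_recr. Qed.

Lemma aF_gt0 n w : 0 <= w -> 0 < aF n w.
Proof.
move=> w0; rewrite /aF big_nat_recl // expr0 ltr_pwDl //.
by apply: sumr_ge0 => j _; rewrite exprn_ge0.
Qed.

Lemma cF_le n w : 0 <= w -> cF n w <= n%:R ^+ 2 * aF n w.
Proof.
move=> w0; rewrite /cF /aF mulr_sumr; apply: ler_sum_nat => j /andP[_ jn].
by rewrite ler_wpM2r ?exprn_ge0 // -!natrX ler_nat leq_exp2r // -ltnS.
Qed.

Lemma aF_closed n w : (w - 1) * aF n w = w ^+ n.+1 - 1.
Proof.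
elim: n => [|n IH]; first by rewrite /aF big_nat1; ring.
by rewrite aF_recr mulrDr IH !exprS; ring.
Qed.

Lemma bF_closed n w :
  (w - 1) ^+ 2 * bF n w = n%:R * w ^+ n.+2 - n.+1%:R * w ^+ n.+1 + w.
Proof.
elim: n => [|n IH]; first by rewrite /bF big_geq //; ring.
by rewrite bF_recr mulrDr IH !exprS; ring.
Qed.

Definition dF n w := n%:R ^+ 2 * aF n w - 2 * n%:R * bF n w + cF n w.

Lemma dF_recr n w :
  dF n.+1 w = dF n w + (2 * n%:R + 1) * aF n w - 2 * bF n w.
Proof. by rewrite /dF aF_recr bF_recr cF_recr; ring. Qed.

Lemma dF_closed n w :
  (w - 1) ^+ 3 * dF n w = w ^+ n.+1 * (w + 1) - (n.+1%:R * w - n%:R) ^+ 2 - w.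
Proof.
elim: n => [|n IH]; first by rewrite /dF /cF big_nat1; ring.
have -> : (w - 1) ^+ 3 * dF n.+1 w = (w - 1) ^+ 3 * dF n w
    + (2 * n%:R + 1) * (w - 1) ^+ 2 * ((w - 1) * aF n w)
    - 2 * (w - 1) * ((w - 1) ^+ 2 * bF n w).
  by rewrite dF_recr; ring.
by rewrite IH aF_closed bF_closed !exprS; ring.
Qed.

Lemma dF_le n w : 0 <= w -> (w - 1) ^+ 3 * dF n w <= w ^+ n.+1 * (w + 1).
Proof. by move=> w0; rewrite dF_closed; have := sqr_ge0 (n.+1%:R * w - n%:R); lra. Qed.

Lemma discr_dFE n w : aF n w * cF n w - bF n w ^+ 2 =
  aF n w * dF n w - (n%:R * aF n w - bF n w) ^+ 2.
Proof. by rewrite /dF; ring. Qed.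

Lemma expr_succ_le_aF n w : (1 <= n)%N -> 1 < w ->
  w ^+ n.+1 * (w + 1) <= w ^+ 2 * aF n w.
Proof.
move=> n1 w1; have w2W : w ^+ 2 <= w ^+ n.+1 by rewrite ler_eXn2l // ltnS.
rewrite -(ler_pM2l (_ : 0 < w - 1)) ?subr_gt0 // [_ * (w ^+ 2 * _)]mulrCA aF_closed; nra.
Qed.

Lemma discr_le n w : (1 <= n)%N -> 1 < w ->
  (aF n w * cF n w - bF n w ^+ 2) * (w - 1) ^+ 3 <= w ^+ 2 * aF n w ^+ 2.
Proof.
move=> n1 w1; have w0 : 0 <= w by apply: ltW (lt_trans ltr01 w1).
have a0 := aF_gt0 n w0.
have dFW := ler_wpM2l (ltW a0) (dF_le n w0).
have WaF := ler_wpM2l (ltW a0) (expr_succ_le_aF n1 w1).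
have sq : 0 <= (n%:R * aF n w - bF n w) ^+ 2 * (w - 1) ^+ 3.
  by rewrite mulr_ge0 ?sqr_ge0 // exprn_ge0 // subr_ge0 ltW.
rewrite discr_dFE; nra.
Qed.

Definition gF n w := n%:R / (2 * Num.sqrt (w - 1) ^+ 3).

Lemma FF_ge0 n w : 0 <= FF n w.
Proof. by rewrite /FF !mulr_ge0 ?invr_ge0 ?mulr_ge0 ?sqrtr_ge0. Qed.

Lemma FF_le_gF n w : (1 <= n)%N -> 1 < w -> FF n w <= gF n w.
Proof.
move=> n1 w1; have w0 : 0 < w by apply: lt_trans ltr01 w1.
have w10 : 0 < w - 1 by rewrite subr_gt0.
have a0 := aF_gt0 n (ltW w0).
have sw0 : 0 < Num.sqrt w by rewrite sqrtr_gt0.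
set a := aF n w; set b := bF n w; set c := cF n w; set s := Num.sqrt (w - 1).
have s0 : 0 < s by rewrite sqrtr_gt0.
have ca_le : Num.sqrt (c / a) <= n%:R.
  apply: le_trans (ler_wsqrtr (_ : c / a <= n%:R ^+ 2)) _.
    by rewrite ler_pdivrMr // cF_le // ltW.
  by rewrite sqrtr_sqr ger0_norm.
have s3E : (Num.sqrt w / s ^+ 3) ^+ 2 = w / (w - 1) ^+ 3.
  by rewrite expr_div_n sqr_sqrtr ?ltW // -exprM mulnC exprM sqr_sqrtr ?ltW.
have discr_sqrt_le : Num.sqrt ((a * c - b ^+ 2) / (w * a ^+ 2)) <= Num.sqrt w / s ^+ 3.
  apply: le_trans (ler_wsqrtr (_ : _ <= (Num.sqrt w / s ^+ 3) ^+ 2)) _; last first.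
    by rewrite sqrtr_sqr ger0_norm // divr_ge0 ?exprn_ge0 ?ltW.
  rewrite s3E -subr_ge0.
  have -> : w / (w - 1) ^+ 3 - (a * c - b ^+ 2) / (w * a ^+ 2) =
     (w ^+ 2 * a ^+ 2 - (a * c - b ^+ 2) * (w - 1) ^+ 3) / ((w - 1) ^+ 3 * (w * a ^+ 2)).
    by field; rewrite ?gt_eqF.
  by rewrite divr_ge0 ?subr_ge0 ?discr_le // mulr_ge0 ?exprn_ge0 ?mulr_ge0 ?ltW.
have -> : gF n w = (2 * Num.sqrt w)^-1 * n%:R * (Num.sqrt w / s ^+ 3).
  by rewrite /gF -/s; field; rewrite ?gt_eqF.
rewrite /FF -/a -/b -/c.
apply: ler_pM; rewrite ?mulr_ge0 ?invr_ge0 ?sqrtr_ge0 //.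
by apply: ler_pM; rewrite ?invr_ge0 ?mulr_ge0 ?sqrtr_ge0.
Qed.

Lemma continuous_sum (I : Type) (s : seq I) (F : I -> R -> R) x :
  (forall i, {for x, continuous (F i)}) ->
  {for x, continuous (fun w => \sum_(i <- s) F i w)}.
Proof.
move=> cF; elim: s => [|i s IH].
  have -> : (fun w => \sum_(i <- [::]) F i w) = fun=> 0.
    by apply/funext => w; rewrite big_nil.
  exact: cst_continuous.
have -> : (fun w => \sum_(j <- i :: s) F j w) = F i + (fun w => \sum_(j <- s) F j w).
  by apply/funext => w; rewrite big_cons.
by apply: continuousD; [exact: cF | exact: IH].
Qed.

Lemma continuous_sqrtr_comp (f : R -> R) x :
  {for x, continuous f} -> {for x, continuous (fun y => Num.sqrt (f y))}.
Proof. by move=> cf; apply: continuous_comp cf _; exact: sqrt_continuous. Qed.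

Lemma continuous_exprn_comp (f : R -> R) k x :
  {for x, continuous f} -> {for x, continuous (fun y => f y ^+ k)}.
Proof. by move=> cf; exact: (continuous_comp cf (@exprn_continuous R k _)). Qed.

Lemma continuous_aF n x : {for x, continuous (aF n)}.
Proof. by apply: continuous_sum => j; exact: exprn_continuous. Qed.

Lemma continuous_bF n x : {for x, continuous (bF n)}.
Proof.
apply: continuous_sum => j.
by apply: continuousM; [exact: cst_continuous | exact: exprn_continuous].
Qed.

Lemma continuous_cF n x : {for x, continuous (cF n)}.
Proof.
apply: continuous_sum => j.
by apply: continuousM; [exact: cst_continuous | exact: exprn_continuous].
Qed.

Lemma continuous_FF n x : 0 < x -> {for x, continuous (FF n)}.
Proof.
move=> x0; have a0 := aF_gt0 n (ltW x0).
have cA := @continuous_aF n x; have cB := @continuous_bF n x.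
have cC := @continuous_cF n x.
rewrite /FF; apply: continuousM; first apply: continuousM.
- apply: continuousV; first by rewrite /= mulf_neq0 // gt_eqF // sqrtr_gt0.
  by apply: continuousM; [exact: cst_continuous | exact: sqrt_continuous].
- apply: continuous_sqrtr_comp; apply: continuousM => //.
  by apply: continuousV => //; exact: lt0r_neq0.
- apply: continuous_sqrtr_comp; apply: continuousM.
    by apply: continuousB; [exact: continuousM | exact: continuous_exprn_comp].
  apply: continuousV; first by rewrite /= mulf_neq0 ?gt_eqF ?exprn_gt0.
  by apply: continuousM; [exact: cvg_id | exact: continuous_exprn_comp].
Qed.

Lemma continuous_gF n x : 1 < x -> {for x, continuous (gF n)}.
Proof.
move=> x1; have s0 : 0 < Num.sqrt (x - 1) by rewrite sqrtr_gt0 subr_gt0.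
rewrite /gF; apply: continuousM; first exact: cst_continuous.
apply: continuousV; first by rewrite /= mulf_neq0 ?gt_eqF ?exprn_gt0.
apply: continuousM; first exact: cst_continuous.
apply: continuous_exprn_comp; apply: continuous_sqrtr_comp.
by apply: continuousB; [exact: cvg_id | exact: cst_continuous].
Qed.

Lemma measurable_fun_cbndy (f : R -> R) (a b : R) : a < b ->
  (forall x, a < x -> {for x, continuous f}) -> measurable_fun `[b, +oo[ f.
Proof.
move=> ab cf.
have sub : `[b, +oo[ `<=` `]a, +oo[.
  by move=> x /=; rewrite !in_itv /= !andbT; exact: lt_le_trans.
apply: (measurable_funS _ sub) => //.
apply: open_continuous_measurable_fun; first exact: interval_open.
by move=> x; rewrite inE /= in_itv /= andbT; exact: cf.
Qed.

Definition GF n w := - (n%:R / Num.sqrt (w - 1)).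

Lemma GF_derive n x : 1 < x -> is_derive x 1 (GF n) (gF n x).
Proof.
move=> x1; have s0 : 0 < Num.sqrt (x - 1) by rewrite sqrtr_gt0 subr_gt0.
have dB : is_derive x 1 (fun y : R => y - 1) 1.
  apply: is_derive_eq (is_deriveB (is_derive_id x 1) (is_derive_cst (1 : R) x 1)) _.
  by rewrite subr0.
have dS : is_derive x 1 (fun y => Num.sqrt (y - 1)) ((2 * Num.sqrt (x - 1))^-1 * 1).
  apply: (@is_derive1_comp _ Num.sqrt (fun y : R => y - 1)).
  by apply: is_derive1_sqrt; rewrite subr_gt0.
have dV := @is_deriveV R (fun y => Num.sqrt (y - 1)) x _ 1 (lt0r_neq0 s0) dS.
apply: is_derive_eq (is_deriveN (is_deriveZ n%:R dV)) _.
by rewrite /gF /GRing.scale /=; field; rewrite ?gt_eqF.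
Qed.

Lemma GF_cvgy n : GF n x @[x --> +oo] --> (0 : R).
Proof.
apply/cvgrPdist_lt => e e0; near=> x.
have xM : 1 + (n%:R / e) ^+ 2 < x by near: x; apply: nbhs_pinfty_gt; rewrite num_real.
have ne0 : 0 <= n%:R / e by rewrite divr_ge0 ?ler0n // ltW.
have x1 : 0 < x - 1 by have := sqr_ge0 (n%:R / e); lra.
have s0 : 0 < Num.sqrt (x - 1) by rewrite sqrtr_gt0.
have ne_lt : n%:R / e < Num.sqrt (x - 1).
  by rewrite -[X in X < _](ger0_norm ne0) -sqrtr_sqr ltr_sqrt //; lra.
rewrite ltr_pdivrMr // in ne_lt.
rewrite /GF sub0r opprK ger0_norm; last by rewrite divr_ge0 ?ler0n ?ltW.
by rewrite ltr_pdivrMr // mulrC.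
Unshelve. all: by end_near.
Qed.

Lemma integral_gF n a : 1 < a ->
  (\int[@lebesgue_measure R]_(w in `[a, +oo[) (gF n w)%:E
    = (n%:R / Num.sqrt (a - 1))%:E)%E.
Proof.
move=> a1; have gt1 x : a <= x -> 1 < x by exact: lt_le_trans.
rewrite (@ge0_continuous_FTC2y R (gF n) (GF n) a 0).
- by rewrite -EFinB /GF sub0r opprK.
- move=> x /gt1 x1; rewrite /gF divr_ge0 ?mulr_ge0 ?exprn_ge0 ?sqrtr_ge0 //.
- apply: continuous_in_subspaceT => x.
  by rewrite inE /= in_itv /= andbT => /gt1; exact: continuous_gF.
- exact: GF_cvgy.
- by move=> x /ltW /gt1 x1; have [] := GF_derive n x1.
- apply: cvg_at_right_filter; apply/differentiable_continuous/derivable1_diffP.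
  by have [] := GF_derive n a1.
- move=> x; rewrite in_itv /= andbT => /ltW /gt1 x1.
  by rewrite derive1E; apply: derive_val; exact: GF_derive.
Qed.

End Moments.

Theorem lemma3p4 (R : realType) (n : nat) : (1 <= n)%N ->
  (\int[@lebesgue_measure R]_(w in `[2%R, +oo[) (FF n w)%:E <= (n%:R)%:E)%E.
Proof.
move=> n1; have [lt02 lt12] : (0 : R) < 2 /\ (1 : R) < 2 by split; lra.
have mFF := measurable_fun_cbndy lt02 (fun x => @continuous_FF R n x).
have mgF := measurable_fun_cbndy lt12 (fun x => @continuous_gF R n x).
have FF_gF : (\int[@lebesgue_measure R]_(w in `[2%R, +oo[) (FF n w)%:E <=
               \int[@lebesgue_measure R]_(w in `[2%R, +oo[) (gF n w)%:E)%E.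
  apply: ge0_le_integral => //.
  - by move=> x _; rewrite lee_fin FF_ge0.
  - exact/measurable_EFinP.
  - exact/measurable_EFinP.
  - move=> x; rewrite /= in_itv /= andbT => x2.
    by rewrite lee_fin FF_le_gF // (lt_le_trans lt12 x2).
apply: le_trans FF_gF _; rewrite integral_gF //.
have -> : (2 : R) - 1 = 1 by lra.
by rewrite sqrtr1 divr1.
Qed.
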